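(* Let $\mathcal M$ be the monoid obtained from the semigroup with zero $\langle a, e \mid ee = e,\ aaa = ae = 0,\ eaa = aa \rangle$ by adjoining an identity element $1$. Then $\mathcal M$ (a monoid of order six) is of type $2^{\aleph_0}$, i.e., the monoid variety generated by $\mathcal M$ has uncountably many subvarieties.
   Context: In the presentation, $0$ denotes the zero element of the presented semigroup; the resulting monoid has the six elements $1, a, e, aa, ea, 0$. Varieties are varieties of monoids (classes closed under homomorphic images, submonoids, and arbitrary direct products). A monoid is of type $2^{\aleph_0}$ if the variety it generates has uncountably many subvarieties. *)

From Stdlib Require Import FunctionalExtensionality.

Record monoid := Monoid {
  carrier :> Type;
  mop : carrier -> carrier -> carrier;
  mone : carrier;
  massoc : forall x y z, mop x (mop y z) = mop (mop x y) z;
  mone_l : forall x, mop mone x = x;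
  mone_r : forall x, mop x mone = x
}.
Arguments mop {m} _ _.
Arguments mone {m}.

Definition is_hom (A B : monoid) (f : A -> B) : Prop :=
  (forall x y : A, f (mop x y) = mop (f x) (f y)) /\ f mone = mone.

Definition prod_monoid (I : Type) (A : I -> monoid) : monoid.
Proof.
  refine (@Monoid (forall i, A i)
            (fun x y i => mop (x i) (y i)) (fun i => mone) _ _ _).
  - intros x y z; apply functional_extensionality_dep; intro i; apply massoc.
  - intros x; apply functional_extensionality_dep; intro i; apply mone_l.
  - intros x; apply functional_extensionality_dep; intro i; apply mone_r.
Defined.

Definition mclass := monoid -> Prop.

Definition closed_H (K : mclass) : Prop :=
  forall (A B : monoid) (f : A -> B),
    K A -> is_hom A B f -> (forall b : B, exists a : A, f a = b) -> K B.

Definition closed_S (K : mclass) : Prop :=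
  forall (A B : monoid) (f : B -> A),
    K A -> is_hom B A f -> (forall x y : B, f x = f y -> x = y) -> K B.

Definition closed_P (K : mclass) : Prop :=
  forall (I : Type) (A : I -> monoid), (forall i, K (A i)) -> K (prod_monoid I A).

Definition variety (K : mclass) : Prop := closed_H K /\ closed_S K /\ closed_P K.

Definition var_gen (M : monoid) : mclass :=
  fun B => forall K : mclass, variety K -> K M -> K B.

Definition subvariety_of_var (M : monoid) (K : mclass) : Prop :=
  variety K /\ forall B, K B -> var_gen M B.

Definition same_class (K1 K2 : mclass) : Prop := forall B, K1 B <-> K2 B.

(** M is of type 2^aleph0: uncountably many subvarieties of var M,
    i.e. there is no injection of the subvarieties into nat. *)
Definition type_continuum (M : monoid) : Prop :=
  ~ exists f : mclass -> nat,
      forall K1 K2, subvariety_of_var M K1 -> subvariety_of_var M K2 ->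
        f K1 = f K2 -> same_class K1 K2.

Inductive M6 : Type := m1 | ma | me | maa | mea | m0.

Definition m6op (x y : M6) : M6 :=
  match x, y with
  | m1, y => y
  | x, m1 => x
  | m0, _ => m0
  | _, m0 => m0
  | ma, ma => maa
  | ma, _ => m0          (* ae = 0, a.aa = 0, a.ea = aea = 0 *)
  | me, ma => mea
  | me, me => me
  | me, maa => maa       (* eaa = aa *)
  | me, mea => mea       (* e.ea = ea *)
  | maa, _ => m0         (* aaa = 0, aae = 0, aa.aa = 0, aa.ea = 0 *)
  | mea, ma => maa       (* eaa = aa *)
  | mea, _ => m0         (* eae = 0, ea.aa = 0, ea.ea = 0 *)
  end.

Lemma m6op_assoc : forall x y z, m6op x (m6op y z) = m6op (m6op x y) z.
Proof. intros [] [] []; reflexivity. Qed.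
Lemma m6op_1l : forall x, m6op m1 x = x.
Proof. intros []; reflexivity. Qed.
Lemma m6op_1r : forall x, m6op x m1 = x.
Proof. intros []; reflexivity. Qed.

Definition Mcal : monoid := Monoid M6 m6op m1 m6op_assoc m6op_1l m6op_1r.

(* For J a set of naturals, let V_J be the subvariety of var M defined by the identities
   W (k+1) = V k, k in J, where V k is W (k+1) with two adjacent letters swapped.  The Rees
   quotient S(W (m+1)) of the free monoid by the ideal of non-factors of W (m+1) lies in var M
   because W (m+1) is an isoterm for M, and it violates W (m+1) = V m.  It satisfies
   W (k+1) = V k for k <> m: a substitution that does not erase one of the two swapped letters
   would make the image of W (k+1) or of V k a factor of W (m+1), and the words W are rigid
   enough to forbid this unless k = m.  So J |-> V_J is injective, and there are continuum
   many subvarieties.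
   W m is an isoterm because an identity of M determines the multiplicity (up to 2) of each
   letter and which letters occur before which, and these data determine a word in which
   every letter occurs at most twice and no two adjacent positions are both first, or both
   second, occurrences. *)

From Stdlib Require Import List Arith Lia PeanoNat Permutation Bool.
From Stdlib Require Import ProofIrrelevance FunctionalExtensionality ClassicalEpsilon Classical.
Import ListNotations.

Local Notation "w .[ i ]" := (nth i w 0) (at level 2, left associativity, format "w .[ i ]").

Definition occ (x : nat) (w : list nat) : nat := count_occ Nat.eq_dec w x.

Lemma In_nth_iff (w : list nat) x : In x w <-> exists a, a < length w /\ w.[a] = x.
Proof.
  split.
  - intros H. destruct (In_nth w x 0 H) as [a [Ha Hb]]. eauto.
  - intros [a [Ha <-]]. apply nth_In. exact Ha.
Qed.

Lemma occ_pos (w : list nat) x : 0 < occ x w <-> exists a, a < length w /\ w.[a] = x.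
Proof. unfold occ. rewrite <- In_nth_iff, (count_occ_In Nat.eq_dec). lia. Qed.

Lemma occ_firstn_pos (w : list nat) i x : i <= length w ->
  0 < occ x (firstn i w) <-> exists a, a < i /\ w.[a] = x.
Proof.
  intros Hi. rewrite occ_pos, length_firstn.
  split; intros [a [Ha Hb]]; exists a; rewrite nth_firstn in *;
    destruct (Nat.ltb_spec a i); split; try lia; auto.
Qed.

Lemma occ_skipn_pos (w : list nat) i x :
  0 < occ x (skipn i w) <-> exists a, i <= a /\ a < length w /\ w.[a] = x.
Proof.
  rewrite occ_pos, length_skipn. split.
  - intros [a [Ha Hb]]. exists (i + a). rewrite nth_skipn in Hb. repeat split; auto; lia.
  - intros [a [Ha [Hb Hc]]]. exists (a - i). rewrite nth_skipn.
    replace (i + (a - i)) with a by lia. split; [lia|exact Hc].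
Qed.

Lemma skipn_nth_cons (w : list nat) k : k < length w -> skipn k w = w.[k] :: skipn (S k) w.
Proof. revert k; induction w; intros [|k] H; simpl in *; try lia; auto with arith. Qed.

Lemma split_at_nth (w : list nat) k : k < length w -> w = firstn k w ++ w.[k] :: skipn (S k) w.
Proof. intros Hk. rewrite <- skipn_nth_cons by exact Hk. symmetry. apply firstn_skipn. Qed.

Lemma occ_split (w : list nat) i x : i < length w ->
  occ x w = occ x (firstn i w) + (if Nat.eq_dec w.[i] x then 1 else 0) + occ x (skipn (S i) w).
Proof.
  intros Hi. unfold occ at 1. rewrite (split_at_nth w i Hi) at 1.
  rewrite count_occ_app. simpl. unfold occ. destruct (Nat.eq_dec w.[i] x); lia.
Qed.

Lemma occ_next x w s : 0 < occ x (skipn s w) ->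
  exists i, s <= i < length w /\ w.[i] = x /\ occ x (skipn (S i) w) = pred (occ x (skipn s w)).
Proof.
  revert s. induction w as [|a w IH]; intros [|s] H; simpl in *;
    try (unfold occ in H; simpl in H; lia).
  - unfold occ in *. simpl in *. destruct (Nat.eq_dec a x) as [<-|Ha].
    + exists 0. repeat split; auto; lia.
    + destruct (IH 0 H) as [i [Hi [Hx Hc]]]. exists (S i). simpl. repeat split; auto; lia.
  - destruct (IH s H) as [i [Hi [Hx Hc]]]. exists (S i). simpl. repeat split; auto; lia.
Qed.

Lemma occ_ge3 x w : 3 <= occ x w ->
  exists i j k, i < j < k /\ k < length w /\ w.[i] = x /\ w.[j] = x /\ w.[k] = x.
Proof.
  intros H.
  destruct (occ_next x w 0 ltac:(simpl; lia)) as [i [Hi [Hxi Ci]]].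
  destruct (occ_next x w (S i) ltac:(rewrite Ci; simpl; lia)) as [j [Hj [Hxj Cj]]].
  destruct (occ_next x w (S j) ltac:(rewrite Cj, Ci; simpl; lia)) as [k [Hk [Hxk _]]].
  exists i, j, k. repeat split; auto; lia.
Qed.

(** * Words determined by their occurrences *)

Definition precedes (w : list nat) (x z : nat) : Prop :=
  exists a a', a < a' < length w /\ w.[a] = x /\ w.[a'] = z.
Definition is_second (w : list nat) (i : nat) : Prop := exists j, j < i /\ w.[j] = w.[i].
Definition has_later (w : list nat) (i : nat) : Prop := exists j, i < j < length w /\ w.[j] = w.[i].

Section WordDeterminedByOccurrences.

Variables u v : list nat.
Hypothesis occ_u_le2 : forall x, occ x u <= 2.
Hypothesis no_adjacent_laters :
  forall i, i + 1 < length u -> has_later u i -> has_later u (i + 1) -> False.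
Hypothesis no_adjacent_seconds :
  forall i, i + 1 < length u -> is_second u i -> is_second u (i + 1) -> False.
Hypothesis occ_vu : forall x, occ x v = occ x u.
Hypothesis precedes_uv : forall x z, x <> z -> precedes u x z <-> precedes v x z.

Lemma length_eq_of_occ : length u = length v.
Proof.
  apply Permutation_length, (Permutation_count_occ Nat.eq_dec).
  intros x. symmetry. apply occ_vu.
Qed.

Section FirstDifference.

Variable i : nat.
Hypothesis i_lt : i < length u.
Hypothesis prefix_eq : firstn i u = firstn i v.
Hypothesis differ : u.[i] <> v.[i].

Local Notation b := (u.[i]).
Local Notation c := (v.[i]).
Local Notation p := (firstn i u).
Local Notation after w := (skipn (S i) w).

Let i_lt_v : i < length v.
Proof. rewrite <- length_eq_of_occ. exact i_lt. Qed.

Lemma occ_u_at x : occ x u = occ x p + (if Nat.eq_dec b x then 1 else 0) + occ x (after u).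
Proof. apply occ_split, i_lt. Qed.

Lemma occ_v_at x : occ x v = occ x p + (if Nat.eq_dec c x then 1 else 0) + occ x (after v).
Proof. rewrite prefix_eq. apply occ_split, i_lt_v. Qed.

Lemma after_v_pos x : x <> c -> 0 < occ x (after u) -> 0 < occ x (after v).
Proof.
  intros Hx H. pose proof (occ_u_at x). pose proof (occ_v_at x). pose proof (occ_vu x).
  destruct (Nat.eq_dec c x); [congruence|]. destruct (Nat.eq_dec b x); lia.
Qed.

Lemma prefix_pos_u x : 0 < occ x p <-> exists a, a < i /\ u.[a] = x.
Proof. apply occ_firstn_pos. lia. Qed.

Lemma prefix_pos_v x : 0 < occ x p <-> exists a, a < i /\ v.[a] = x.
Proof. rewrite prefix_eq. apply occ_firstn_pos. lia. Qed.

Lemma after_pos w x : 0 < occ x (after w) <-> exists a, i < a < length w /\ w.[a] = x.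
Proof. rewrite occ_skipn_pos. split; intros [a Ha]; exists a; lia. Qed.

Lemma locate_u x a : a < length u -> u.[a] = x ->
  (a < i /\ 0 < occ x p) \/ (a = i /\ b = x) \/ (i < a /\ 0 < occ x (after u)).
Proof.
  intros Ha Hx. destruct (lt_eq_lt_dec a i) as [[H|<-]|H]; auto.
  - left. split; [exact H|]. apply prefix_pos_u. eauto.
  - right; right. split; [exact H|]. apply after_pos. eauto.
Qed.

Lemma locate_v x a : a < length v -> v.[a] = x ->
  (a < i /\ 0 < occ x p) \/ (a = i /\ c = x) \/ (i < a /\ 0 < occ x (after v)).
Proof.
  intros Ha Hx. destruct (lt_eq_lt_dec a i) as [[H|<-]|H]; auto.
  - left. split; [exact H|]. apply prefix_pos_v. eauto.
  - right; right. split; [exact H|]. apply after_pos. eauto.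
Qed.

Lemma occ_after_b : occ b (after v) = S (occ b (after u)).
Proof.
  pose proof (occ_u_at b). pose proof (occ_v_at b). pose proof (occ_vu b).
  destruct (Nat.eq_dec b b); [|congruence]. destruct (Nat.eq_dec c b); [congruence|]. lia.
Qed.

Lemma occ_after_c : occ c (after u) = S (occ c (after v)).
Proof.
  pose proof (occ_u_at c). pose proof (occ_v_at c). pose proof (occ_vu c).
  destruct (Nat.eq_dec c c); [|congruence]. destruct (Nat.eq_dec b c); [congruence|]. lia.
Qed.

Lemma second_b_not_after : 0 < occ b p -> occ b (after u) = 0.
Proof.
  pose proof (occ_u_at b). pose proof (occ_u_le2 b). destruct (Nat.eq_dec b b); [lia|congruence].
Qed.

Lemma second_c_not_after : 0 < occ c p -> occ c (after v) = 0.
Proof.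
  pose proof (occ_v_at c). pose proof (occ_vu c). pose proof (occ_u_le2 c).
  destruct (Nat.eq_dec c c); [lia|congruence].
Qed.

Lemma differ_fresh_c_single_b : occ c p = 0 -> occ b p = 0 -> occ b (after u) = 0 -> False.
Proof.
  intros Hc Hb Hb0.
  destruct (proj1 (after_pos v b) ltac:(rewrite occ_after_b; lia)) as [a' [Ha' Hba']].
  assert (Hv : precedes v c b) by (exists i, a'; repeat split; auto; lia).
  apply precedes_uv in Hv; [|congruence].
  destruct Hv as [a [a2 [Ha [Hca Hba]]]].
  destruct (locate_u c a ltac:(lia) Hca) as [[? ?]|[[? ?]|[? ?]]]; try lia; try congruence.
  destruct (locate_u b a2 ltac:(lia) Hba) as [[? ?]|[[? ?]|[? ?]]]; lia.
Qed.

Lemma differ_fresh_c_double_b : occ c p = 0 -> occ b p = 0 -> 0 < occ b (after u) -> False.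
Proof.
  intros Hc Hb Hb1.
  destruct (proj1 (after_pos u b) Hb1) as [j [Hj Hbj]].
  assert (Hi1 : i + 1 < length u) by lia.
  assert (Hnl : ~ has_later u (i + 1)).
  { intros Hl. apply (no_adjacent_laters i Hi1); [exists j; auto|exact Hl]. }
  destruct (Nat.eq_dec u.[i + 1] c) as [Hdc|Hdc].
  - assert (Hu : precedes u b c) by (exists i, (i + 1); repeat split; auto; lia).
    apply precedes_uv in Hu; [|congruence].
    destruct Hu as [a [a2 [Ha [Hba Hca]]]].
    destruct (locate_v b a ltac:(lia) Hba) as [[? ?]|[[? ?]|[? ?]]]; try lia; try congruence.
    destruct (locate_v c a2 ltac:(lia) Hca) as [[? ?]|[[? ?]|[Ha2 Hc2]]]; try lia.
    assert (H2 : 0 < occ c (skipn (S (S i)) u)).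
    { assert (E : after u = c :: skipn (S (S i)) u).
      { rewrite skipn_nth_cons by lia. rewrite <- Hdc, Nat.add_1_r. reflexivity. }
      pose proof occ_after_c as Hcs. rewrite E in Hcs. unfold occ in Hcs, Hc2 |- *.
      rewrite count_occ_cons_eq in Hcs by reflexivity. lia. }
    destruct (proj1 (occ_skipn_pos u _ c) H2) as [k [Hk [Hk' Hck]]].
    apply Hnl. exists k. split; [lia|congruence].
  - assert (Hd : 0 < occ u.[i + 1] (after v)).
    { apply after_v_pos; [exact Hdc|]. apply after_pos. exists (i + 1). split; [lia|reflexivity]. }
    destruct (proj1 (after_pos v _) Hd) as [a' [Ha' Hda']].
    assert (Hv : precedes v c u.[i + 1]) by (exists i, a'; repeat split; auto; lia).
    apply precedes_uv in Hv; [|congruence].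
    destruct Hv as [a [a2 [Ha [Hca Hda]]]].
    destruct (locate_u c a ltac:(lia) Hca) as [[? ?]|[[? ?]|[? ?]]]; try lia; try congruence.
    assert (a <> i + 1) by (intros ->; congruence).
    apply Hnl. exists a2. split; [lia|exact Hda].
Qed.

Lemma differ_fresh_c_second_b : occ c p = 0 -> 0 < occ b p -> False.
Proof.
  intros Hc Hb.
  destruct (proj1 (after_pos v b) ltac:(rewrite occ_after_b; lia)) as [a' [Ha' Hba']].
  assert (Hv : precedes v c b) by (exists i, a'; repeat split; auto; lia).
  apply precedes_uv in Hv; [|congruence].
  destruct Hv as [a [a2 [Ha [Hca Hba]]]].
  pose proof (second_b_not_after Hb).
  destruct (locate_u c a ltac:(lia) Hca) as [[? ?]|[[? ?]|[? ?]]]; try lia; try congruence.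
  destruct (locate_u b a2 ltac:(lia) Hba) as [[? ?]|[[? ?]|[? ?]]]; lia.
Qed.

Lemma differ_second_c_fresh_b : 0 < occ c p -> occ b p = 0 -> False.
Proof.
  intros Hc Hb.
  destruct (proj1 (after_pos u c) ltac:(rewrite occ_after_c; lia)) as [a' [Ha' Hca']].
  assert (Hu : precedes u b c) by (exists i, a'; repeat split; auto; lia).
  apply precedes_uv in Hu; [|congruence].
  destruct Hu as [a [a2 [Ha [Hba Hca]]]].
  pose proof (second_c_not_after Hc).
  destruct (locate_v b a ltac:(lia) Hba) as [[? ?]|[[? ?]|[? ?]]]; try lia; try congruence.
  destruct (locate_v c a2 ltac:(lia) Hca) as [[? ?]|[[? ?]|[? ?]]]; lia.
Qed.

Lemma differ_second_c_second_b : 0 < occ c p -> 0 < occ b p -> False.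
Proof.
  intros Hc Hb.
  destruct (proj1 (after_pos u c) ltac:(rewrite occ_after_c; lia)) as [a' [Ha' Hca']].
  assert (Hi1 : i + 1 < length u) by lia.
  assert (Hns : ~ is_second u (i + 1)).
  { intros Hs. apply (no_adjacent_seconds i Hi1); [|exact Hs].
    destruct (proj1 (prefix_pos_u b) Hb) as [j [Hj Hbj]]. exists j. auto. }
  assert (He : occ u.[i + 1] p = 0).
  { destruct (Nat.eq_dec (occ u.[i + 1] p) 0) as [|He]; [assumption|exfalso].
    destruct (proj1 (prefix_pos_u u.[i + 1]) ltac:(lia)) as [j [Hj Hej]].
    apply Hns. exists j. split; [lia|exact Hej]. }
  assert (Heb : u.[i + 1] <> b) by (intros Heb; apply Hns; exists i; split; [lia|auto]).
  assert (Hec : u.[i + 1] <> c) by (intros Hec; rewrite Hec in He; lia).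
  assert (a' <> i + 1) by (intros ->; congruence).
  assert (Hu : precedes u u.[i + 1] c) by (exists (i + 1), a'; repeat split; auto; lia).
  apply precedes_uv in Hu; [|exact Hec].
  destruct Hu as [a [a2 [Ha [Hea Hca]]]].
  pose proof (second_c_not_after Hc).
  destruct (locate_v _ a ltac:(lia) Hea) as [[? ?]|[[? ?]|[? ?]]]; try lia; try congruence.
  destruct (locate_v c a2 ltac:(lia) Hca) as [[? ?]|[[? ?]|[? ?]]]; lia.
Qed.

Lemma no_first_difference : False.
Proof.
  destruct (Nat.eq_dec (occ c p) 0) as [Hc|Hc], (Nat.eq_dec (occ b p) 0) as [Hb|Hb].
  - destruct (Nat.eq_dec (occ b (after u)) 0).
    + exact (differ_fresh_c_single_b Hc Hb ltac:(assumption)).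
    + exact (differ_fresh_c_double_b Hc Hb ltac:(lia)).
  - exact (differ_fresh_c_second_b Hc ltac:(lia)).
  - exact (differ_second_c_fresh_b ltac:(lia) Hb).
  - exact (differ_second_c_second_b ltac:(lia) ltac:(lia)).
Qed.

End FirstDifference.

Lemma word_eq_of_occ_precedes : u = v.
Proof.
  apply nth_ext with (d := 0) (d' := 0); [exact length_eq_of_occ|].
  intros i. induction i as [i IH] using (well_founded_induction lt_wf). intros Hi.
  destruct (Nat.eq_dec u.[i] v.[i]) as [|Hne]; [assumption|exfalso].
  apply (no_first_difference i Hi); [|exact Hne].
  apply nth_ext with (d := 0) (d' := 0).
  - rewrite !length_firstn, <- length_eq_of_occ. reflexivity.
  - intros j Hj. rewrite length_firstn in Hj. rewrite !nth_firstn.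
    destruct (Nat.ltb_spec j i); [|lia]. apply IH; lia.
Qed.

End WordDeterminedByOccurrences.

(** * Isoterms and Rees quotients *)

Definition eval_word (M : monoid) (phi : nat -> M) (w : list nat) : M :=
  fold_right (fun x acc => mop (phi x) acc) mone w.

Definition sat (M : monoid) (u v : list nat) : Prop :=
  forall phi : nat -> M, eval_word M phi u = eval_word M phi v.

Definition factor (u w : list nat) : Prop := exists A B, w = A ++ u ++ B.

Definition isoterm (M : monoid) (w : list nat) : Prop :=
  forall u v, factor u w -> sat M u v -> u = v.

Lemma eval_word_cons (M : monoid) phi a w :
  eval_word M phi (a :: w) = mop (phi a) (eval_word M phi w).
Proof. reflexivity. Qed.

Lemma eval_word_app (M : monoid) phi u v :
  eval_word M phi (u ++ v) = mop (eval_word M phi u) (eval_word M phi v).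
Proof.
  induction u as [|a u IH]; simpl.
  - symmetry. apply mone_l.
  - rewrite IH. apply massoc.
Qed.

Lemma eval_word_hom (A B : monoid) (f : A -> B) psi u : is_hom A B f ->
  eval_word B (fun x => f (psi x)) u = f (eval_word A psi u).
Proof.
  intros [Hm H1]. induction u as [|a u IH]; [symmetry; exact H1|].
  rewrite !eval_word_cons, IH, Hm. reflexivity.
Qed.

Lemma eval_word_prod (I : Type) (A : I -> monoid) (phi : nat -> prod_monoid I A) u :
  eval_word (prod_monoid I A) phi u = fun i => eval_word (A i) (fun x => phi x i) u.
Proof. induction u as [|a u IH]; [reflexivity|]. rewrite eval_word_cons, IH. reflexivity. Qed.

Lemma factor_app_l u v w : factor (u ++ v) w -> factor u w.
Proof. intros [A [B ->]]. exists A, (v ++ B). now rewrite <- app_assoc. Qed.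

Lemma factor_app_r u v w : factor (u ++ v) w -> factor v w.
Proof. intros [A [B ->]]. exists (A ++ u), B. now rewrite <- !app_assoc. Qed.

Lemma factor_length u w : factor u w -> length u <= length w.
Proof. intros [A [B ->]]. rewrite !length_app. lia. Qed.

Lemma factor_same_length u w : factor u w -> length u = length w -> u = w.
Proof.
  intros [A [B ->]] Hl. rewrite !length_app in Hl.
  destruct A; [|simpl in Hl; lia]. destruct B; [|simpl in Hl; lia].
  simpl. rewrite app_nil_r. reflexivity.
Qed.

Lemma nth_factor (A u B : list nat) i : i < length u -> u.[i] = (A ++ u ++ B).[length A + i].
Proof. intros H. rewrite app_nth2, app_nth1 by lia. f_equal. lia. Qed.

Fixpoint prefixb (u w : list nat) : bool :=
  match u, w with
  | [], _ => true
  | a :: u', b :: w' => Nat.eqb a b && prefixb u' w'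
  | _ :: _, [] => false
  end.

Fixpoint factorb (u w : list nat) : bool :=
  prefixb u w || match w with [] => false | _ :: w' => factorb u w' end.

Lemma prefixb_spec u w : prefixb u w = true <-> exists B, w = u ++ B.
Proof.
  revert w; induction u as [|a u IH]; intros w; simpl.
  - split; [intros _; exists w; reflexivity|auto].
  - destruct w as [|b w].
    + split; [discriminate|]. intros [B HB]. discriminate.
    + rewrite andb_true_iff, Nat.eqb_eq, IH. split.
      * intros [-> [B ->]]. exists B. reflexivity.
      * intros [B HB]. injection HB as -> HB. split; [reflexivity|]. exists B; auto.
Qed.

Lemma factorb_spec u w : factorb u w = true <-> factor u w.
Proof.
  induction w as [|b w IH]; simpl.
  - rewrite orb_false_r, prefixb_spec. split.
    + intros [B HB]. exists [], B. auto.
    + intros [A [B HB]]. destruct A; [|discriminate]. exists B. auto.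
  - rewrite orb_true_iff, prefixb_spec, IH. split.
    + intros [[B HB]|[A [B HB]]].
      * exists [], B. auto.
      * exists (b :: A), B. rewrite HB. reflexivity.
    + intros [A [B HB]]. destruct A as [|c A].
      * left. exists B. auto.
      * right. injection HB as -> HB. exists A, B. auto.
Qed.

Lemma factorb_nil w : factorb [] w = true.
Proof. apply factorb_spec. exists [], w. reflexivity. Qed.

(* The Rees quotient of the free monoid by the ideal of non-factors of [w]:
   [Some u] is a factor [u] of [w], and [None] is the zero. *)
Definition rees_ok (w : list nat) (o : option (list nat)) : bool :=
  match o with Some u => factorb u w | None => true end.

Definition rees_elt (w : list nat) := { o : option (list nat) | rees_ok w o = true }.

Definition rees_mul (w : list nat) (o o' : option (list nat)) : option (list nat) :=
  match o, o' with
  | Some u, Some v => if factorb (u ++ v) w then Some (u ++ v) else None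
  | _, _ => None
  end.

Lemma rees_mul_ok w o o' : rees_ok w (rees_mul w o o') = true.
Proof.
  destruct o as [u|], o' as [v|]; simpl; auto.
  destruct (factorb (u ++ v) w) eqn:E; simpl; auto.
Qed.

Lemma rees_mul_assoc w o1 o2 o3 :
  rees_mul w o1 (rees_mul w o2 o3) = rees_mul w (rees_mul w o1 o2) o3.
Proof.
  destruct o1 as [u1|], o2 as [u2|], o3 as [u3|]; simpl; auto.
  - destruct (factorb (u2 ++ u3) w) eqn:E1, (factorb (u1 ++ u2) w) eqn:E2; simpl; auto.
    + rewrite app_assoc. reflexivity.
    + destruct (factorb (u1 ++ u2 ++ u3) w) eqn:E3; auto.
      apply factorb_spec in E3. rewrite app_assoc in E3.
      apply factor_app_l, factorb_spec in E3. congruence.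
    + destruct (factorb ((u1 ++ u2) ++ u3) w) eqn:E3; auto.
      apply factorb_spec in E3. rewrite <- app_assoc in E3.
      apply factor_app_r, factorb_spec in E3. congruence.
  - destruct (factorb (u1 ++ u2) w); auto.
Qed.

Definition rees_op (w : list nat) (x y : rees_elt w) : rees_elt w :=
  exist _ (rees_mul w (proj1_sig x) (proj1_sig y)) (rees_mul_ok w _ _).

Definition rees_one (w : list nat) : rees_elt w := exist _ (Some []) (factorb_nil w).

Lemma rees_eq w (x y : rees_elt w) : proj1_sig x = proj1_sig y -> x = y.
Proof.
  destruct x as [x Hx], y as [y Hy]; simpl. intros ->. f_equal.
  apply Eqdep_dec.UIP_dec. decide equality.
Qed.

Lemma rees_assoc w (x y z : rees_elt w) : rees_op w x (rees_op w y z) = rees_op w (rees_op w x y) z.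
Proof. apply rees_eq, rees_mul_assoc. Qed.

Lemma rees_one_l w (x : rees_elt w) : rees_op w (rees_one w) x = x.
Proof. apply rees_eq. destruct x as [[u|] Hu]; simpl in *; auto. rewrite Hu. reflexivity. Qed.

Lemma rees_one_r w (x : rees_elt w) : rees_op w x (rees_one w) = x.
Proof.
  apply rees_eq. destruct x as [[u|] Hu]; simpl in *; auto. rewrite app_nil_r, Hu. reflexivity.
Qed.

Definition rees (w : list nat) : monoid :=
  Monoid (rees_elt w) (rees_op w) (rees_one w) (rees_assoc w) (rees_one_l w) (rees_one_r w).

Definition rees_word (w u : list nat) : rees w.
Proof.
  refine (exist _ (if factorb u w then Some u else None) _).
  destruct (factorb u w) eqn:E; simpl; auto.
Defined.

Lemma rees_word_app w u1 u2 : mop (rees_word w u1) (rees_word w u2) = rees_word w (u1 ++ u2).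
Proof.
  apply rees_eq. simpl.
  destruct (factorb u1 w) eqn:E1, (factorb u2 w) eqn:E2; simpl; auto;
  destruct (factorb (u1 ++ u2) w) eqn:E3; auto; exfalso; apply factorb_spec in E3.
  - apply factor_app_r, factorb_spec in E3. congruence.
  - apply factor_app_l, factorb_spec in E3. congruence.
  - apply factor_app_l, factorb_spec in E3. congruence.
Qed.

Definition opt_concat (ph : nat -> option (list nat)) (u : list nat) : option (list nat) :=
  fold_right (fun x acc => match ph x, acc with Some a, Some b => Some (a ++ b) | _, _ => None end)
    (Some []) u.

Lemma eval_rees w (phi : nat -> rees w) u :
  proj1_sig (eval_word (rees w) phi u) =
  match opt_concat (fun x => proj1_sig (phi x)) u with
  | Some s => if factorb s w then Some s else None
  | None => None
  end.
Proof.
  induction u as [|x u IH].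
  - simpl. rewrite factorb_nil. reflexivity.
  - rewrite eval_word_cons. cbn [mop rees rees_op proj1_sig]. rewrite IH. simpl opt_concat.
    destruct (proj1_sig (phi x)) as [a|]; [|reflexivity].
    destruct (opt_concat (fun x0 => proj1_sig (phi x0)) u) as [b|]; [|reflexivity].
    destruct (factorb b w) eqn:Eb; [reflexivity|].
    simpl. destruct (factorb (a ++ b) w) eqn:Eab; [|reflexivity].
    apply factorb_spec, factor_app_r, factorb_spec in Eab. congruence.
Qed.

Lemma rees_word_sat M w u v : isoterm M w -> sat M u v -> rees_word w u = rees_word w v.
Proof.
  intros Hiso Huv. apply rees_eq. unfold rees_word. cbn [proj1_sig].
  destruct (factorb u w) eqn:E1, (factorb v w) eqn:E2; auto.
  - f_equal. apply Hiso; [apply factorb_spec; exact E1|exact Huv].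
  - exfalso. assert (u = v) by (apply Hiso; [apply factorb_spec; exact E1|exact Huv]). congruence.
  - exfalso. assert (v = u).
    { apply Hiso; [apply factorb_spec; exact E2|intros phi; symmetry; apply Huv]. }
    congruence.
Qed.

(* The monoid of word functions [(nat -> M) -> M], i.e. the free object of the variety
   generated by [M]; it is a submonoid of a power of [M]. *)
Section WordFunctions.

Variable M : monoid.

Definition word_fun (w : list nat) : (nat -> M) -> M := fun phi => eval_word M phi w.

Definition word_fun_elt := { f : (nat -> M) -> M | exists w, f = word_fun w }.

Lemma word_fun_app u v : word_fun (u ++ v) = fun phi => mop (word_fun u phi) (word_fun v phi).
Proof. apply functional_extensionality. intros phi. apply eval_word_app. Qed.

Definition word_fun_op (f g : word_fun_elt) : word_fun_elt.
Proof.
  refine (exist _ (fun phi => mop (proj1_sig f phi) (proj1_sig g phi)) _).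
  destruct f as [f [u ->]], g as [g [v ->]]. exists (u ++ v). rewrite word_fun_app. reflexivity.
Defined.

Definition word_fun_one : word_fun_elt := exist _ (fun _ => mone) (ex_intro _ [] eq_refl).

Lemma word_fun_eq (f g : word_fun_elt) : proj1_sig f = proj1_sig g -> f = g.
Proof. destruct f as [f Hf], g as [g Hg]; simpl. intros ->. f_equal. apply proof_irrelevance. Qed.

Lemma word_fun_assoc (x y z : word_fun_elt) :
  word_fun_op x (word_fun_op y z) = word_fun_op (word_fun_op x y) z.
Proof. apply word_fun_eq, functional_extensionality. intros. apply massoc. Qed.

Lemma word_fun_one_l (x : word_fun_elt) : word_fun_op word_fun_one x = x.
Proof. apply word_fun_eq, functional_extensionality. intros. apply mone_l. Qed.

Lemma word_fun_one_r (x : word_fun_elt) : word_fun_op x word_fun_one = x.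
Proof. apply word_fun_eq, functional_extensionality. intros. apply mone_r. Qed.

Definition word_fun_monoid : monoid :=
  Monoid word_fun_elt word_fun_op word_fun_one word_fun_assoc word_fun_one_l word_fun_one_r.

Definition word_fun_embed (f : word_fun_monoid) : prod_monoid (nat -> M) (fun _ => M) :=
  proj1_sig f.

Lemma word_fun_embed_hom : is_hom _ _ word_fun_embed.
Proof. split; reflexivity. Qed.

Lemma word_fun_in_var : var_gen M word_fun_monoid.
Proof.
  intros K [_ [HS HP]] HM.
  apply (HS _ _ word_fun_embed (HP _ _ (fun _ => HM)) word_fun_embed_hom word_fun_eq).
Qed.

Definition word_of (f : word_fun_elt) : list nat :=
  proj1_sig (constructive_indefinite_description _ (proj2_sig f)).

Lemma word_of_spec f : proj1_sig f = word_fun (word_of f).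
Proof. unfold word_of. destruct (constructive_indefinite_description _ _) as [w Hw]. exact Hw. Qed.

Lemma sat_word_of (f : word_fun_elt) u : proj1_sig f = word_fun u -> sat M (word_of f) u.
Proof.
  intros Hf phi. change (word_fun (word_of f) phi = word_fun u phi).
  rewrite <- word_of_spec, Hf. reflexivity.
Qed.

End WordFunctions.

Lemma rees_word_nil w : rees_word w [] = mone.
Proof. apply rees_eq. simpl. rewrite factorb_nil. reflexivity. Qed.

Lemma rees_word_surj w (x : rees w) : exists u, rees_word w u = x.
Proof.
  destruct x as [[u|] Hu].
  - exists u. apply rees_eq. simpl in *. rewrite Hu. reflexivity.
  - exists (0 :: w). apply rees_eq. simpl.
    destruct (factorb (0 :: w) w) eqn:E; [|reflexivity].
    apply factorb_spec, factor_length in E. simpl in E. lia.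
Qed.

(* The map sending a word function to the class of a word representing it is well defined
   on [S(w)] exactly because [w] is an isoterm. *)
Lemma rees_in_var M w : isoterm M w -> var_gen M (rees w).
Proof.
  intros Hiso K HK HM.
  set (h := fun f : word_fun_monoid M => rees_word w (word_of M f)).
  assert (Hh : forall (f : word_fun_monoid M) u, proj1_sig f = word_fun M u -> h f = rees_word w u).
  { intros f u Hf. apply (rees_word_sat M w); [exact Hiso|]. apply sat_word_of, Hf. }
  apply (proj1 HK (word_fun_monoid M) (rees w) h (word_fun_in_var M K HK HM)).
  - split.
    + intros [f [u ->]] [g [v ->]].
      cbn [mop word_fun_monoid]. rewrite (Hh _ (u ++ v)), <- rees_word_app.
      * f_equal; symmetry; apply Hh; reflexivity.
      * simpl. symmetry. apply word_fun_app.
    + rewrite (Hh _ []) by reflexivity. apply rees_word_nil.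
  - intros x. destruct (rees_word_surj w x) as [u <-].
    exists (exist _ (word_fun M u) (ex_intro _ u eq_refl) : word_fun_monoid M).
    apply Hh. reflexivity.
Qed.

(** * Identities of the six-element monoid *)

Definition a_pow (k : nat) : Mcal := match k with 0 => m1 | 1 => ma | 2 => maa | _ => m0 end.

Definition subst_a (x : nat) : nat -> Mcal := fun z => if Nat.eq_dec z x then ma else m1.

Lemma eval_subst_a x w : eval_word Mcal (subst_a x) w = a_pow (occ x w).
Proof.
  induction w as [|b w IH]; [reflexivity|].
  rewrite eval_word_cons, IH. change (@mop Mcal) with m6op. unfold subst_a, occ. simpl.
  destruct (Nat.eq_dec b x); [|destruct (count_occ Nat.eq_dec w x); reflexivity].
  destruct (count_occ Nat.eq_dec w x) as [|[|[|k]]]; reflexivity.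
Qed.

Fixpoint memb (z : nat) (w : list nat) : bool :=
  match w with [] => false | b :: w' => Nat.eqb b z || memb z w' end.

Fixpoint precedesb (x z : nat) (w : list nat) : bool :=
  match w with [] => false | b :: w' => (Nat.eqb b x && memb z w') || precedesb x z w' end.

Lemma memb_spec z w : memb z w = true <-> In z w.
Proof.
  induction w as [|b w IH]; simpl; [split; [discriminate|tauto]|].
  rewrite orb_true_iff, Nat.eqb_eq, IH. tauto.
Qed.

Lemma precedes_cons b w x z : precedes (b :: w) x z <-> (b = x /\ In z w) \/ precedes w x z.
Proof.
  split.
  - intros [i [j [Hij [Hi Hz]]]]. simpl in Hij.
    destruct i as [|i], j as [|j]; try lia; simpl in Hi, Hz.
    + left. split; [exact Hi|]. subst. apply nth_In. lia.
    + right. exists i, j. repeat split; auto; lia.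
  - intros [[Hb Hz]|[i [j [Hij [Hi Hz]]]]].
    + apply In_nth_iff in Hz. destruct Hz as [k [Hk Hkz]].
      exists 0, (S k). simpl. repeat split; auto; lia.
    + exists (S i), (S j). simpl. repeat split; auto; lia.
Qed.

Lemma precedesb_spec x z w : precedesb x z w = true <-> precedes w x z.
Proof.
  induction w as [|b w IH]; simpl.
  - split; [discriminate|]. intros [i [j [Hij _]]]. simpl in Hij. lia.
  - rewrite precedes_cons, orb_true_iff, andb_true_iff, Nat.eqb_eq, memb_spec, IH. tauto.
Qed.

Lemma precedesb_occ x z w : precedesb x z w = true -> 0 < occ x w.
Proof.
  intros H. apply precedesb_spec in H. destruct H as [i [j [Hij [Hi _]]]].
  apply occ_pos. exists i. split; [lia|exact Hi].
Qed.

(* Substituting [a] for [x] and [e] for [z] detects [occ x w] (up to 2), whether [z] occurs,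
   and whether an [x] precedes a [z]: the product is [0] as soon as [ae] appears. *)
Definition subst_ae (x z : nat) : nat -> Mcal :=
  fun b => if Nat.eq_dec b x then ma else if Nat.eq_dec b z then me else m1.

Definition ae_value (k : nat) (xz has_z : bool) : Mcal :=
  if xz then m0
  else match k with
       | 0 => if has_z then me else m1
       | 1 => if has_z then mea else ma
       | 2 => maa
       | _ => m0
       end.

Lemma eval_subst_ae x z w : x <> z ->
  eval_word Mcal (subst_ae x z) w = ae_value (occ x w) (precedesb x z w) (memb z w).
Proof.
  intros Hxz. induction w as [|b w IH]; [reflexivity|].
  rewrite eval_word_cons, IH. change (@mop Mcal) with m6op. unfold subst_ae, occ. simpl.
  destruct (Nat.eq_dec b x) as [->|Hbx]; [|destruct (Nat.eq_dec b z) as [->|Hbz]].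
  - rewrite Nat.eqb_refl, (proj2 (Nat.eqb_neq x z) Hxz).
    destruct (precedesb x x w), (precedesb x z w), (memb z w),
      (count_occ Nat.eq_dec w x) as [|[|[|k]]]; reflexivity.
  - rewrite (proj2 (Nat.eqb_neq z x) Hbx), Nat.eqb_refl.
    destruct (precedesb x z w), (memb z w), (count_occ Nat.eq_dec w x) as [|[|[|k]]]; reflexivity.
  - rewrite (proj2 (Nat.eqb_neq b x) Hbx), (proj2 (Nat.eqb_neq b z) Hbz).
    destruct (precedesb x z w), (memb z w), (count_occ Nat.eq_dec w x) as [|[|[|k]]]; reflexivity.
Qed.

Lemma Mcal_sat_occ u v : sat Mcal u v -> (forall x, occ x u <= 2) -> forall x, occ x v = occ x u.
Proof.
  intros Huv H2 x. pose proof (Huv (subst_a x)) as E. rewrite !eval_subst_a in E.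
  specialize (H2 x). destruct (occ x u) as [|[|[|k]]], (occ x v) as [|[|[|k']]];
    simpl in E; try discriminate; lia.
Qed.

Lemma Mcal_sat_precedes u v : sat Mcal u v -> (forall x, occ x u <= 2) ->
  forall x z, x <> z -> precedes u x z <-> precedes v x z.
Proof.
  intros Huv H2 x z Hxz. pose proof (Mcal_sat_occ u v Huv H2 x) as Hc.
  pose proof (Huv (subst_ae x z)) as E. rewrite !eval_subst_ae, Hc in E by exact Hxz.
  rewrite <- !precedesb_spec.
  pose proof (H2 x). pose proof (precedesb_occ x z u). pose proof (precedesb_occ x z v).
  rewrite Hc in *.
  destruct (occ x u) as [|[|[|k]]]; [| | |lia];
  destruct (precedesb x z u), (precedesb x z v), (memb z u), (memb z v); simpl in E;
    try discriminate; try tauto; try (exfalso; lia).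
Qed.

Lemma Mcal_sat_eq u v : sat Mcal u v ->
  (forall x, occ x u <= 2) ->
  (forall i, i + 1 < length u -> has_later u i -> has_later u (i + 1) -> False) ->
  (forall i, i + 1 < length u -> is_second u i -> is_second u (i + 1) -> False) ->
  u = v.
Proof.
  intros Huv H2 Hl Hs. apply word_eq_of_occ_precedes; auto.
  - apply Mcal_sat_occ; assumption.
  - apply Mcal_sat_precedes; assumption.
Qed.

(** * The isoterms [W m] *)

Definition y (p : nat) : nat := 3 * p.
Definition q (p : nat) : nat := 3 * p + 1.
Definition t_letter : nat := 1.
Definition s_letter : nat := 2.

Definition block (p : nat) : list nat := [y p; y (p - 1); q p; q p].

Fixpoint blocks (a k : nat) : list nat :=
  match k with 0 => [] | S k' => block a ++ blocks (S a) k' end.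

Definition closing (m : nat) : list nat :=
  [y (m + 3); y (m + 2); y (m + 4); y (m + 3); s_letter; y (m + 4)].

(* W m = y1 t y2 y1 (y3 y2 q3 q3) ... (y(m+2) y(m+1) q(m+2) q(m+2))
           y(m+3) y(m+2) y(m+4) y(m+3) s y(m+4),
   in which every letter but t and s occurs exactly twice. *)
Definition W (m : nat) : list nat := [y 1; t_letter; y 2; y 1] ++ blocks 3 m ++ closing m.

Lemma blocks_length a k : length (blocks a k) = 4 * k.
Proof. revert a; induction k; intros; simpl; [lia|]. rewrite IHk. lia. Qed.

Lemma W_length m : length (W m) = 4 * m + 10.
Proof. unfold W. rewrite !length_app, blocks_length. simpl. lia. Qed.

Lemma blocks_nth a k i r : i < k -> r < 4 -> (blocks a k).[4 * i + r] = (block (a + i)).[r].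
Proof.
  revert a i; induction k; intros a i Hi Hr; [lia|].
  cbn [blocks]. destruct i.
  - rewrite app_nth1 by (simpl; lia). now replace (a + 0) with a by lia.
  - rewrite app_nth2 by (simpl; lia). simpl length.
    replace (4 * S i + r - 4) with (4 * i + r) by lia.
    rewrite IHk by lia. now replace (S a + i) with (a + S i) by lia.
Qed.

Lemma W_letter_cases m i : i < 4 * m + 10 ->
  (i = 0 /\ (W m).[i] = y 1) \/ (i = 1 /\ (W m).[i] = t_letter) \/
  (i = 2 /\ (W m).[i] = y 2) \/ (i = 3 /\ (W m).[i] = y 1) \/
  (exists p, 3 <= p <= m + 2 /\
     ((i = 4*p-8 /\ (W m).[i] = y p) \/ (i = 4*p-7 /\ (W m).[i] = y (p-1)) \/
      (i = 4*p-6 /\ (W m).[i] = q p) \/ (i = 4*p-5 /\ (W m).[i] = q p))) \/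
  (i = 4*m+4 /\ (W m).[i] = y (m+3)) \/ (i = 4*m+5 /\ (W m).[i] = y (m+2)) \/
  (i = 4*m+6 /\ (W m).[i] = y (m+4)) \/ (i = 4*m+7 /\ (W m).[i] = y (m+3)) \/
  (i = 4*m+8 /\ (W m).[i] = s_letter) \/ (i = 4*m+9 /\ (W m).[i] = y (m+4)).
Proof.
  intros Hi. unfold W.
  destruct (Nat.lt_ge_cases i 4) as [H4|H4].
  - rewrite app_nth1 by (simpl; lia).
    destruct i as [|[|[|[|i]]]]; simpl; try lia; tauto.
  - rewrite app_nth2 by (simpl; lia). simpl length.
    destruct (Nat.lt_ge_cases (i-4) (4*m)) as [Hb|Hb].
    + rewrite app_nth1 by (rewrite blocks_length; lia).
      pose proof (Nat.div_mod_eq (i-4) 4) as Hd.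
      pose proof (Nat.mod_upper_bound (i-4) 4 ltac:(lia)) as Hm.
      set (k := (i-4)/4) in *. set (r := (i-4) mod 4) in *.
      assert (Hk : k < m) by lia.
      replace (i-4) with (4*k+r) by lia.
      rewrite blocks_nth by lia.
      do 4 right. left. exists (3+k). split; [lia|].
      unfold block.
      destruct r as [|[|[|[|r]]]]; simpl; try (exfalso; lia).
      * left. split; [lia|reflexivity].
      * right; left. split; [lia|f_equal; lia].
      * right; right; left. split; [lia|reflexivity].
      * right; right; right. split; [lia|reflexivity].
    + rewrite app_nth2 by (rewrite blocks_length; lia).
      rewrite blocks_length. unfold closing.
      remember (i - 4 - 4*m) as r eqn:Hr.
      destruct r as [|[|[|[|[|[|r]]]]]]; simpl; try (exfalso; lia).
      * do 5 right; left. split; [lia|reflexivity].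
      * do 6 right; left. split; [lia|reflexivity].
      * do 7 right; left. split; [lia|reflexivity].
      * do 8 right; left. split; [lia|reflexivity].
      * do 9 right; left. split; [lia|reflexivity].
      * do 10 right. split; [lia|reflexivity].
Qed.

Definition W_twins m i j := (i = 0 /\ j = 3) \/ (i = 2 /\ j = 5) \/
  (exists p, 3 <= p <= m + 2 /\ ((i = 4*p-8 /\ j = 4*p-3) \/ (i = 4*p-6 /\ j = 4*p-5))) \/
  (i = 4*m+4 /\ j = 4*m+7) \/ (i = 4*m+6 /\ j = 4*m+9).

Ltac solve_twins :=
  first [ exfalso; lia
        | left; lia
        | right; left; lia
        | right; right; right; lia
        | match goal with
          | p : nat |- _ => right; right; left; exists p; lia
          end ].

Lemma W_twins_of_eq m i j : i < j -> j < 4 * m + 10 -> (W m).[i] = (W m).[j] -> W_twins m i j.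
Proof.
  intros Hij Hj Heq.
  destruct (W_letter_cases m i ltac:(lia)) as
    [[-> Hi]|[[-> Hi]|[[-> Hi]|[[-> Hi]|[[p [Hp [[-> Hi]|[[-> Hi]|[[-> Hi]|[-> Hi]]]]]]|
     [[-> Hi]|[[-> Hi]|[[-> Hi]|[[-> Hi]|[[-> Hi]|[-> Hi]]]]]]]]]]];
  destruct (W_letter_cases m j ltac:(lia)) as
    [[-> Hj']|[[-> Hj']|[[-> Hj']|[[-> Hj']|[[p' [Hp' [[-> Hj']|[[-> Hj']|[[-> Hj']|[-> Hj']]]]]]|
     [[-> Hj']|[[-> Hj']|[[-> Hj']|[[-> Hj']|[[-> Hj']|[-> Hj']]]]]]]]]]];
  rewrite ?Hi, ?Hj' in Heq; unfold y, q, t_letter, s_letter in Heq; unfold W_twins;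
  solve_twins.
Qed.

Ltac W_letter := match goal with |- (W ?m).[?i] = _ =>
  let H := fresh in pose proof (W_letter_cases m i ltac:(lia)) as H;
  decompose [or and ex] H; clear H;
  match goal with Hv : (W m).[i] = _ |- _ =>
    rewrite Hv; unfold y, q, t_letter, s_letter; lia end end.

Ltac destruct_twins H := unfold W_twins in H; decompose [or and ex] H; clear H.

Definition pairs_distinct (w : list nat) := forall i j, i < j -> j + 1 < length w ->
  w.[i] = w.[j] -> w.[i + 1] = w.[j + 1] -> False.

Definition no_triple (w : list nat) := forall i j k, i < j -> j < k -> k < length w ->
  w.[i] = w.[j] -> w.[j] = w.[k] -> False.

Lemma W_pairs_distinct m : pairs_distinct (W m).
Proof.
  intros i j Hij Hj E1 E2. rewrite W_length in Hj.
  pose proof (W_twins_of_eq m i j Hij ltac:(lia) E1) as P.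
  pose proof (W_twins_of_eq m (i + 1) (j + 1) ltac:(lia) ltac:(lia) E2) as P'.
  destruct_twins P; destruct_twins P'; lia.
Qed.

Lemma W_no_triple m : no_triple (W m).
Proof.
  intros i j k Hij Hjk Hk E1 E2. rewrite W_length in Hk.
  pose proof (W_twins_of_eq m i j Hij ltac:(lia) E1) as P.
  pose proof (W_twins_of_eq m j k Hjk ltac:(lia) E2) as P'.
  destruct_twins P; destruct_twins P'; lia.
Qed.

Lemma W_occ_le2 m x : occ x (W m) <= 2.
Proof.
  destruct (Nat.le_gt_cases (occ x (W m)) 2) as [|H]; [assumption|exfalso].
  destruct (occ_ge3 x (W m) ltac:(lia)) as [i [j [k [? [? [? [? ?]]]]]]].
  apply (W_no_triple m i j k); auto; lia || congruence.
Qed.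

Lemma W_no_adjacent_seconds m a j j' : j < a -> j' < a + 1 -> a + 1 < 4 * m + 10 ->
  (W m).[j] = (W m).[a] -> (W m).[j'] = (W m).[a + 1] -> False.
Proof.
  intros H1 H2 H3 E1 E2.
  pose proof (W_twins_of_eq m j a H1 ltac:(lia) E1) as P.
  pose proof (W_twins_of_eq m j' (a + 1) H2 ltac:(lia) E2) as P'.
  destruct_twins P; destruct_twins P'; lia.
Qed.

Lemma W_no_adjacent_laters m a k k' : a < k -> a + 1 < k' -> k < 4 * m + 10 -> k' < 4 * m + 10 ->
  (W m).[a] = (W m).[k] -> (W m).[a + 1] = (W m).[k'] -> False.
Proof.
  intros H1 H2 H3 H4 E1 E2.
  pose proof (W_twins_of_eq m a k H1 ltac:(lia) E1) as P.
  pose proof (W_twins_of_eq m (a + 1) k' H2 ltac:(lia) E2) as P'.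
  destruct_twins P; destruct_twins P'; lia.
Qed.

Lemma W_isoterm m : isoterm Mcal (W m).
Proof.
  intros u v [A [B HW]] Huv.
  pose proof (W_length m) as LW.
  assert (Lu : length A + length u <= 4 * m + 10) by (rewrite <- LW, HW, !length_app; lia).
  apply Mcal_sat_eq; [exact Huv| | |].
  - intros x. pose proof (W_occ_le2 m x) as H. rewrite HW in H. unfold occ in *.
    rewrite !count_occ_app in H. lia.
  - intros i Hi [k [Hk1 Hk2]] [k' [Hk'1 Hk'2]].
    apply (W_no_adjacent_laters m (length A + i) (length A + k) (length A + k')); try lia.
    + rewrite HW, <- !nth_factor by lia. congruence.
    + replace (length A + i + 1) with (length A + (i + 1)) by lia.
      rewrite HW, <- !nth_factor by lia. congruence.
  - intros i Hi [j [Hj1 Hj2]] [j' [Hj'1 Hj'2]].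
    apply (W_no_adjacent_seconds m (length A + i) (length A + j) (length A + j')); try lia.
    + rewrite HW, <- !nth_factor by lia. congruence.
    + replace (length A + i + 1) with (length A + (i + 1)) by lia.
      rewrite HW, <- !nth_factor by lia. congruence.
Qed.

(** * Images of substitutions *)

Definition subst_word (th : nat -> list nat) (u : list nat) : list nat := concat (map th u).

Lemma subst_word_app th u v : subst_word th (u ++ v) = subst_word th u ++ subst_word th v.
Proof. unfold subst_word. now rewrite map_app, concat_app. Qed.

Lemma subst_word_cons th a u : subst_word th (a :: u) = th a ++ subst_word th u.
Proof. reflexivity. Qed.

Lemma firstn_S_nth (u : list nat) k : k < length u -> firstn (S k) u = firstn k u ++ [u.[k]].
Proof.
  revert k; induction u as [|a u IH]; intros k Hk; simpl in *; [lia|].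
  destruct k; simpl; [reflexivity|]. rewrite IH by lia. reflexivity.
Qed.

Lemma singleton_of_length1 (l : list nat) : length l = 1 -> l = [l.[0]].
Proof. destruct l as [|a [|b l]]; simpl; intros; try lia; reflexivity. Qed.

Lemma length_pos_of_nonnil (l : list nat) : l <> [] -> 1 <= length l.
Proof. destruct l; simpl; [congruence|lia]. Qed.

Section SubstitutionImage.

Variables (A B : list nat) (th : nat -> list nat) (u w : list nat).

Definition img_start (k : nat) : nat := length A + length (subst_word th (firstn k u)).

Lemma img_start_S k : k < length u -> img_start (S k) = img_start k + length (th u.[k]).
Proof.
  intros Hk. unfold img_start. rewrite firstn_S_nth, subst_word_app, length_app by exact Hk.
  unfold subst_word at 2. simpl. rewrite app_nil_r. lia.
Qed.

Lemma img_start_mono k k' : k <= k' -> k' <= length u -> img_start k <= img_start k'.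
Proof.
  intros H1 H2. induction H1; [lia|].
  rewrite img_start_S by lia. specialize (IHle ltac:(lia)). lia.
Qed.

Hypothesis HW : w = A ++ subst_word th u ++ B.

Lemma img_nth k j : k < length u -> j < length (th u.[k]) -> w.[img_start k + j] = (th u.[k]).[j].
Proof.
  intros Hk Hj. rewrite HW, (split_at_nth u k Hk) at 1.
  rewrite subst_word_app, subst_word_cons, <- !app_assoc.
  unfold img_start. rewrite app_nth2 by lia.
  replace (length A + length (subst_word th (firstn k u)) + j - length A)
    with (length (subst_word th (firstn k u)) + j) by lia.
  rewrite app_nth2 by lia.
  replace (length (subst_word th (firstn k u)) + j - length (subst_word th (firstn k u)))
    with j by lia.
  rewrite app_nth1 by lia. reflexivity.
Qed.

Lemma img_end_le k : k < length u -> img_start k + length (th u.[k]) <= length w.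
Proof.
  intros Hk. rewrite <- img_start_S by exact Hk.
  pose proof (img_start_mono (S k) (length u) ltac:(lia) ltac:(lia)).
  unfold img_start in *. rewrite firstn_all in *. rewrite HW, !length_app. lia.
Qed.

Lemma img_start_lt k : k < length u -> length (th u.[k]) = 1 -> img_start k < length w.
Proof. intros Hk H. pose proof (img_end_le k Hk). lia. Qed.

Lemma img_nth_single k : k < length u -> th u.[k] = [(th u.[k]).[0]] ->
  w.[img_start k] = (th u.[k]).[0].
Proof.
  intros Hk H1. rewrite <- (Nat.add_0_r (img_start k)).
  apply img_nth; [exact Hk|]. rewrite H1. simpl. lia.
Qed.

Lemma img_nth_fixed k c : k < length u -> u.[k] = c -> th c = [c] -> w.[img_start k] = c.
Proof.
  intros Hk Hc Hth. rewrite <- (Nat.add_0_r (img_start k)), img_nth; rewrite ?Hc, ?Hth; auto.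
Qed.

Hypothesis HN : pairs_distinct w.

(* A letter occurring twice in [u] has an image of length at most one, lest a factor of
   length two repeat in [w]. *)
Lemma repeated_letter_short i1 i2 : i1 < i2 -> i2 < length u -> u.[i1] = u.[i2] ->
  length (th u.[i1]) <= 1.
Proof.
  intros H12 H2 Heq.
  destruct (Nat.le_gt_cases (length (th u.[i1])) 1) as [|Hl]; [assumption|exfalso].
  pose proof (img_start_S i1 ltac:(lia)).
  pose proof (img_start_mono (S i1) i2 ltac:(lia) ltac:(lia)).
  pose proof (img_end_le i2 H2) as L2. rewrite <- Heq in L2.
  pose proof (img_nth i1 0 ltac:(lia) ltac:(lia)) as V10.
  pose proof (img_nth i1 1 ltac:(lia) ltac:(lia)) as V11.
  pose proof (img_nth i2 0 ltac:(lia) ltac:(rewrite <- Heq; lia)) as V20.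
  pose proof (img_nth i2 1 ltac:(lia) ltac:(rewrite <- Heq; lia)) as V21.
  rewrite <- Heq in V20, V21. rewrite Nat.add_0_r in V10, V20.
  apply (HN (img_start i1) (img_start i2)); [lia|lia| |].
  - now rewrite V10, V20.
  - now rewrite V11, V21.
Qed.

Hypothesis HT : no_triple w.

(* If [th d] were empty, the fixed letter [c] would land on position [k], a third occurrence
   of [c] in [w]. *)
Lemma align_past_letter k c d j0 i2 :
  img_start k = k -> k < i2 -> i2 < length u ->
  u.[k] = d -> u.[i2] = d -> u.[k + 1] = c -> th c = [c] ->
  w.[k + 1] = c -> w.[j0] = c -> j0 < k -> w.[k] = d -> k + 1 < length w ->
  th d = [d] /\ img_start (k + 1) = k + 1 /\ img_start (k + 2) = k + 2.
Proof.
  intros Hk Hi2 Hi2U Ud Ud2 Uc Hc Wc Wj0 Hj0 Wd HWl.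
  pose proof (repeated_letter_short k i2 Hi2 Hi2U ltac:(congruence)) as L. rewrite Ud in L.
  pose proof (img_start_S k ltac:(lia)) as S1. rewrite Ud, Hk in S1.
  pose proof (img_start_S (k + 1) ltac:(lia)) as S2. rewrite Uc, Hc in S2. simpl in S2.
  replace (S (k + 1)) with (k + 2) in S2 by lia. replace (S k) with (k + 1) in S1 by lia.
  pose proof (img_nth_fixed (k + 1) c ltac:(lia) Uc Hc) as K.
  pose proof (img_start_lt (k + 1) ltac:(lia) ltac:(rewrite Uc, Hc; reflexivity)) as In1.
  assert (HL : length (th d) = 0 \/ length (th d) = 1) by lia.
  destruct HL as [E|E]; rewrite E in S1.
  - exfalso. rewrite S1, Nat.add_0_r in K, In1.
    apply (HT j0 k (k + 1)); try lia; congruence.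
  - split; [|lia].
    pose proof (singleton_of_length1 _ E) as Hl.
    pose proof (img_nth_single k ltac:(lia) ltac:(rewrite Ud; exact Hl)) as V.
    rewrite Hk, Ud, Wd in V. rewrite Hl, <- V. reflexivity.
Qed.

(* The fixed letter [e] must land on its own position [k + 3] (an earlier one would be a
   third occurrence), which forces [th c] and [th d] to be single letters. *)
Lemma align_past_square k c d e j0 i2 :
  img_start k = k -> k + 2 < i2 -> i2 < length u ->
  u.[k] = c -> u.[k + 1] = c -> u.[k + 2] = d -> u.[i2] = d ->
  u.[k + 3] = e -> th e = [e] -> w.[j0] = e -> j0 < k -> w.[k + 3] = e ->
  w.[k] = c -> w.[k + 2] = d -> k + 3 < length w ->
  th c = [c] /\ th d = [d] /\ img_start (k + 2) = k + 2 /\ img_start (k + 4) = k + 4.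
Proof.
  intros Hk Hi2 Hi2U U0 U1 U2 Ui2 U3 He Wj0 Hj0 W3 W0 W2 HWl.
  pose proof (repeated_letter_short k (k + 1) ltac:(lia) ltac:(lia) ltac:(congruence)) as L1.
  pose proof (repeated_letter_short (k + 2) i2 ltac:(lia) Hi2U ltac:(congruence)) as L2.
  rewrite U0 in L1. rewrite U2 in L2.
  pose proof (img_start_S k ltac:(lia)) as S1. rewrite U0, Hk in S1.
  pose proof (img_start_S (k + 1) ltac:(lia)) as S2. rewrite U1 in S2.
  pose proof (img_start_S (k + 2) ltac:(lia)) as S3. rewrite U2 in S3.
  pose proof (img_start_S (k + 3) ltac:(lia)) as S4. rewrite U3, He in S4. simpl in S4.
  replace (S k) with (k + 1) in S1 by lia. replace (S (k + 1)) with (k + 2) in S2 by lia.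
  replace (S (k + 2)) with (k + 3) in S3 by lia. replace (S (k + 3)) with (k + 4) in S4 by lia.
  pose proof (img_nth_fixed (k + 3) e ltac:(lia) U3 He) as K.
  pose proof (img_start_lt (k + 3) ltac:(lia) ltac:(rewrite U3, He; reflexivity)) as In1.
  assert (E3 : img_start (k + 3) = k + 3).
  { destruct (Nat.eq_dec (img_start (k + 3)) (k + 3)) as [|Hne]; [assumption|exfalso].
    apply (HT j0 (img_start (k + 3)) (k + 3)); try lia; congruence. }
  pose proof (singleton_of_length1 (th c) ltac:(lia)) as Hlc.
  pose proof (singleton_of_length1 (th d) ltac:(lia)) as Hld.
  pose proof (img_nth_single k ltac:(lia) ltac:(rewrite U0; exact Hlc)) as V0.
  pose proof (img_nth_single (k + 2) ltac:(lia) ltac:(rewrite U2; exact Hld)) as V2.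
  rewrite U0, Hk, W0 in V0. assert (E2 : img_start (k + 2) = k + 2) by lia.
  rewrite U2, E2, W2 in V2.
  split; [rewrite Hlc, <- V0; reflexivity|].
  split; [rewrite Hld, <- V2; reflexivity|].
  split; lia.
Qed.

End SubstitutionImage.

Arguments img_nth {A B th u w} HW k j.
Arguments img_end_le {A B th u w} HW k.
Arguments img_start_lt {A B th u w} HW k.
Arguments img_nth_single {A B th u w} HW k.
Arguments img_nth_fixed {A B th u w} HW k c.
Arguments repeated_letter_short {A B th u w} HW HN i1 i2.
Arguments align_past_letter {A B th u w} HW HN HT k c d j0 i2.
Arguments align_past_square {A B th u w} HW HN HT k c d e j0 i2.

(* As long as [W n] and [W m] agree, the image of [W n] is aligned letter by letter with
   [W m] ([pos k = k]); the alignment cannot survive the first place where they differ. *)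
Section Rigidity.

Variables (n m : nat) (A B : list nat) (th : nat -> list nat).
Hypothesis HW : W m = A ++ subst_word th (W n) ++ B.

Let HN : pairs_distinct (W m) := W_pairs_distinct m.
Let HT : no_triple (W m) := W_no_triple m.
Let LU : length (W n) = 4 * n + 10 := W_length n.
Let LW : length (W m) = 4 * m + 10 := W_length m.

Local Notation pos := (img_start A th (W n)).

Lemma align_block p : 4 <= p -> p <= Nat.min n m + 2 ->
  pos (4*p-8) = 4*p-8 -> th (y (p-1)) = [y (p-1)] ->
  pos (4*p-4) = 4*p-4 /\ th (y p) = [y p].
Proof.
  intros H4 Hp Hst Hth.
  assert (U0 : (W n).[4*p-8] = y p) by W_letter.
  assert (U1 : (W n).[4*p-8+1] = y (p-1)) by W_letter.
  assert (U5 : (W n).[4*p-3] = y p) by W_letter.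
  assert (M0 : (W m).[4*p-8] = y p) by W_letter.
  assert (M1 : (W m).[4*p-8+1] = y (p-1)) by W_letter.
  assert (Mj : (W m).[4*(p-1)-8] = y (p-1)) by W_letter.
  destruct (align_past_letter HW HN HT (4*p-8) (y (p-1)) (y p) (4*(p-1)-8) (4*p-3)
              Hst ltac:(lia) ltac:(lia) U0 U5 U1 Hth M1 Mj ltac:(lia) M0 ltac:(lia))
    as [Hyp [_ S2]].
  assert (V2 : (W n).[4*p-8+2] = q p) by W_letter.
  assert (V3 : (W n).[4*p-8+2+1] = q p) by W_letter.
  assert (V4 : (W n).[4*p-8+2+2] = y (p+1)) by W_letter.
  assert (V5 : (W n).[4*p-8+2+3] = y p) by W_letter.
  assert (N2 : (W m).[4*p-8+2] = q p) by W_letter.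
  assert (N4 : (W m).[4*p-8+2+2] = y (p+1)) by W_letter.
  assert (N5 : (W m).[4*p-8+2+3] = y p) by W_letter.
  assert (Hi2 : exists i2, 4*p-8+2+2 < i2 < length (W n) /\ (W n).[i2] = y (p+1)).
  { destruct (le_lt_dec (p+1) (n+2)).
    - exists (4*p+1). split; [lia|W_letter].
    - exists (4*p-1). split; [lia|W_letter]. }
  destruct Hi2 as [i2 [[Hi2a Hi2b] Hi2c]].
  destruct (align_past_square HW HN HT (4*p-8+2) (q p) (y (p+1)) (y p) (4*p-8) i2
              S2 Hi2a Hi2b V2 V3 V4 Hi2c V5 Hyp M0 ltac:(lia) N5 N2 N4 ltac:(lia))
    as [_ [_ [S3 _]]].
  split; [|exact Hyp].
  replace (4*p-4) with (4*p-8+2+2) by lia. exact S3.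
Qed.

Hypotheses (n_pos : 1 <= n) (m_pos : 1 <= m).
Hypotheses (th_y2 : th (y 2) <> []) (th_q3 : th (q 3) <> []).

(* The images of [y 2] and of the square [q 3 q 3] are single letters sitting on twin
   positions of [W m], which pins the image of the prefix of [W n] down. *)
Lemma align_init : pos 8 = 8 /\ th (y 3) = [y 3].
Proof.
  assert (U0 : (W n).[0] = y 1) by W_letter.
  assert (U2 : (W n).[2] = y 2) by W_letter.
  assert (U3 : (W n).[3] = y 1) by W_letter.
  assert (U4 : (W n).[4] = y 3) by W_letter.
  assert (U5 : (W n).[5] = y 2) by W_letter.
  assert (U6 : (W n).[6] = q 3) by W_letter.
  assert (U7 : (W n).[7] = q 3) by W_letter.
  assert (U9 : (W n).[9] = y 3) by W_letter.
  assert (M4 : (W m).[4] = y 3) by W_letter.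
  pose proof (repeated_letter_short HW HN 2 5 ltac:(lia) ltac:(lia) ltac:(congruence)) as L2.
  pose proof (repeated_letter_short HW HN 6 7 ltac:(lia) ltac:(lia) ltac:(congruence)) as L6.
  pose proof (repeated_letter_short HW HN 0 3 ltac:(lia) ltac:(lia) ltac:(congruence)) as L0.
  pose proof (repeated_letter_short HW HN 4 9 ltac:(lia) ltac:(lia) ltac:(congruence)) as L4.
  rewrite U2 in L2. rewrite U6 in L6. rewrite U0 in L0. rewrite U4 in L4.
  pose proof (length_pos_of_nonnil _ th_y2). pose proof (length_pos_of_nonnil _ th_q3).
  pose proof (singleton_of_length1 (th (y 2)) ltac:(lia)) as Ly2.
  pose proof (singleton_of_length1 (th (q 3)) ltac:(lia)) as Lq3.
  pose proof (img_start_S A th (W n) 2 ltac:(lia)) as S3. rewrite U2 in S3.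
  pose proof (img_start_S A th (W n) 3 ltac:(lia)) as S4. rewrite U3 in S4.
  pose proof (img_start_S A th (W n) 4 ltac:(lia)) as S5. rewrite U4 in S5.
  pose proof (img_start_S A th (W n) 5 ltac:(lia)) as S6. rewrite U5 in S6.
  pose proof (img_start_S A th (W n) 6 ltac:(lia)) as S7. rewrite U6 in S7.
  pose proof (img_start_S A th (W n) 7 ltac:(lia)) as S8. rewrite U7 in S8.
  pose proof (img_start_lt HW 7 ltac:(lia) ltac:(rewrite U7; lia)) as I7.
  pose proof (img_nth_single HW 6 ltac:(lia) ltac:(rewrite U6; exact Lq3)) as V6.
  pose proof (img_nth_single HW 7 ltac:(lia) ltac:(rewrite U7; exact Lq3)) as V7.
  pose proof (img_nth_single HW 2 ltac:(lia) ltac:(rewrite U2; exact Ly2)) as V2.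
  pose proof (img_nth_single HW 5 ltac:(lia) ltac:(rewrite U5; exact Ly2)) as V5.
  rewrite U6 in V6. rewrite U7 in V7. rewrite U2 in V2. rewrite U5 in V5.
  pose proof (W_twins_of_eq m (pos 6) (pos 7) ltac:(lia) ltac:(lia) ltac:(congruence)) as P1.
  pose proof (W_twins_of_eq m (pos 2) (pos 5) ltac:(lia) ltac:(lia) ltac:(congruence)) as P2.
  assert (E : pos 4 = 4 /\ pos 8 = 8 /\ length (th (y 3)) = 1).
  { destruct_twins P1; destruct_twins P2; lia. }
  destruct E as [E4 [E8 Ly3]].
  split; [exact E8|].
  pose proof (singleton_of_length1 _ Ly3) as Hl.
  pose proof (img_nth_single HW 4 ltac:(lia) ltac:(rewrite U4; exact Hl)) as V4.
  rewrite U4, E4, M4 in V4. rewrite Hl, <- V4. reflexivity.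
Qed.

Lemma align_upto p : 4 <= p -> p <= Nat.min n m + 3 ->
  pos (4*p-8) = 4*p-8 /\ th (y (p-1)) = [y (p-1)].
Proof.
  induction p as [|p IHp]; intros H4 Hp; [lia|].
  destruct (Nat.eq_dec p 3) as [->|Hp3]; [exact align_init|].
  destruct (IHp ltac:(lia) ltac:(lia)) as [Hst Hth].
  destruct (align_block p ltac:(lia) ltac:(lia) Hst Hth) as [Sx Hy].
  replace (4 * S p - 8) with (4*p-4) by lia. replace (S p - 1) with p by lia. auto.
Qed.

Lemma align_closing (k := Nat.min n m) : pos (4*k+6) = 4*k+6 /\ th (y (k+3)) = [y (k+3)].
Proof.
  destruct (align_upto (k+3) ltac:(lia) ltac:(lia)) as [Hst Hth].
  replace (4*(k+3)-8) with (4*k+4) in Hst by lia.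
  replace (k+3-1) with (k+2) in Hth by lia.
  assert (U0 : (W n).[4*k+4] = y (k+3)) by (unfold k in *; W_letter).
  assert (U1 : (W n).[4*k+4+1] = y (k+2)) by (unfold k in *; W_letter).
  assert (M0 : (W m).[4*k+4] = y (k+3)) by (unfold k in *; W_letter).
  assert (M1 : (W m).[4*k+4+1] = y (k+2)) by (unfold k in *; W_letter).
  assert (Mj : (W m).[4*k] = y (k+2)) by (unfold k in *; W_letter).
  assert (Hi2 : exists i2, 4*k+4 < i2 < length (W n) /\ (W n).[i2] = y (k+3)).
  { destruct (Nat.eq_dec k n) as [E|E].
    - exists (4*n+7). split; [lia|]. unfold k in *. W_letter.
    - exists (4*k+9). split; [lia|]. unfold k in *. W_letter. }
  destruct Hi2 as [i2 [[Ha Hb] Hc]].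
  destruct (align_past_letter HW HN HT (4*k+4) (y (k+2)) (y (k+3)) (4*k) i2
              Hst Ha Hb U0 Hc U1 Hth M1 Mj ltac:(lia) M0 ltac:(lia))
    as [Hy3 [_ S2]].
  replace (4*k+4+2) with (4*k+6) in S2 by lia. auto.
Qed.

(* Past the common part, [W n] closes with [y (n+4) y (n+3)] where [W m] has the square
   [q (n+3) q (n+3)], and the fixed letter [y (n+3)] must land on it. *)
Lemma subst_not_shorter : n < m -> False.
Proof.
  intros Hlt. destruct align_closing as [S2 Hy3].
  replace (Nat.min n m) with n in S2, Hy3 by lia.
  assert (V6 : (W n).[4*n+6] = y (n+4)) by W_letter.
  assert (V7 : (W n).[4*n+6+1] = y (n+3)) by W_letter.
  assert (V9 : (W n).[4*n+9] = y (n+4)) by W_letter.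
  assert (N6 : (W m).[4*n+6] = q (n+3)) by W_letter.
  assert (N7 : (W m).[4*n+7] = q (n+3)) by W_letter.
  pose proof (repeated_letter_short HW HN (4*n+6) (4*n+9) ltac:(lia) ltac:(lia)
                ltac:(congruence)) as L. rewrite V6 in L.
  pose proof (img_start_S A th (W n) (4*n+6) ltac:(lia)) as S7. rewrite V6, S2 in S7.
  replace (S (4*n+6)) with (4*n+6+1) in S7 by lia.
  pose proof (img_nth_fixed HW (4*n+6+1) (y (n+3)) ltac:(lia) V7 Hy3) as K.
  rewrite S7 in K.
  assert (HL : length (th (y (n+4))) = 0 \/ length (th (y (n+4))) = 1) by lia.
  destruct HL as [E|E]; rewrite E in K.
  - rewrite Nat.add_0_r, N6 in K. unfold y, q in K. lia.
  - replace (4*n+6+1) with (4*n+7) in K by lia. rewrite N7 in K. unfold y, q in K. lia.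
Qed.

(* Past the common part, [W n] continues with the square [q (m+3) q (m+3)] and
   [y (m+4) y (m+3)] where [W m] has [y (m+4) y (m+3) s y (m+4)]: the square is erased and
   the image of the rest of [W n] has to start on the letter [s]. *)
Lemma subst_longer_erases_square : m < n -> pos (4*m+10) = 4*m+8 /\ th (y (m+4)) = [y (m+4)].
Proof.
  intros Hgt. destruct align_closing as [S2 Hy3].
  replace (Nat.min n m) with m in S2, Hy3 by lia.
  assert (V6 : (W n).[4*m+6] = q (m+3)) by W_letter.
  assert (V7 : (W n).[4*m+7] = q (m+3)) by W_letter.
  assert (V8 : (W n).[4*m+8] = y (m+4)) by W_letter.
  assert (V9 : (W n).[4*m+9] = y (m+3)) by W_letter.
  assert (N6 : (W m).[4*m+6] = y (m+4)) by W_letter.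
  assert (N8 : (W m).[4*m+8] = s_letter) by W_letter.
  assert (N9 : (W m).[4*m+9] = y (m+4)) by W_letter.
  assert (Hj2 : exists j2, 4*m+8 < j2 < length (W n) /\ (W n).[j2] = y (m+4)).
  { destruct (le_lt_dec (m+4) (n+2)).
    - exists (4*m+13). split; [lia|W_letter].
    - exists (4*m+11). split; [lia|W_letter]. }
  destruct Hj2 as [j2 [[Ja Jb] Jc]].
  pose proof (repeated_letter_short HW HN (4*m+6) (4*m+7) ltac:(lia) ltac:(lia)
                ltac:(congruence)) as L1. rewrite V6 in L1.
  pose proof (repeated_letter_short HW HN (4*m+8) j2 ltac:(lia) ltac:(lia)
                ltac:(congruence)) as L2. rewrite V8 in L2.
  pose proof (img_start_S A th (W n) (4*m+6) ltac:(lia)) as T7. rewrite V6, S2 in T7.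
  pose proof (img_start_S A th (W n) (4*m+7) ltac:(lia)) as T8. rewrite V7 in T8.
  pose proof (img_start_S A th (W n) (4*m+8) ltac:(lia)) as T9. rewrite V8 in T9.
  pose proof (img_start_S A th (W n) (4*m+9) ltac:(lia)) as T10. rewrite V9, Hy3 in T10.
  simpl length in T10.
  replace (S (4*m+6)) with (4*m+7) in T7 by lia.
  replace (S (4*m+7)) with (4*m+8) in T8 by lia.
  replace (S (4*m+8)) with (4*m+9) in T9 by lia.
  replace (S (4*m+9)) with (4*m+10) in T10 by lia.
  pose proof (img_nth_fixed HW (4*m+9) (y (m+3)) ltac:(lia) V9 Hy3) as K.
  assert (E : length (th (q (m+3))) = 0 /\ length (th (y (m+4))) = 1).
  { assert (HL1 : length (th (q (m+3))) = 0 \/ length (th (q (m+3))) = 1) by lia.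
    assert (HL2 : length (th (y (m+4))) = 0 \/ length (th (y (m+4))) = 1) by lia.
    destruct HL1 as [E1|E1]; destruct HL2 as [E2|E2]; rewrite E1 in T7, T8; rewrite E2 in T9;
      rewrite T9, T8, T7 in K; try (split; assumption);
      [ replace (4*m+6+0+0+0) with (4*m+6) in K by lia; rewrite N6 in K
      | replace (4*m+6+1+1+0) with (4*m+8) in K by lia; rewrite N8 in K
      | replace (4*m+6+1+1+1) with (4*m+9) in K by lia; rewrite N9 in K ];
      unfold y, s_letter in K; lia. }
  destruct E as [E1 E2].
  pose proof (singleton_of_length1 _ E2) as Hl.
  pose proof (img_nth_single HW (4*m+8) ltac:(lia) ltac:(rewrite V8; exact Hl)) as V.
  rewrite V8, T8, T7, E1 in V. replace (4*m+6+0+0) with (4*m+6) in V by lia.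
  rewrite N6 in V. rewrite <- V in Hl.
  split; [lia|exact Hl].
Qed.

(* The next block of [W n] is [q (m+4) q (m+4) y (m+5) y (m+4)]; the fixed [y (m+4)] must
   land on the last letter of [W m], so [y (m+5)] is sent to [s], which occurs only once. *)
Lemma subst_longer_by_two : m + 2 <= n -> False.
Proof.
  intros Hle. destruct (subst_longer_erases_square ltac:(lia)) as [S10 Hl].
  assert (N8 : (W m).[4*m+8] = s_letter) by W_letter.
  assert (N9 : (W m).[4*m+9] = y (m+4)) by W_letter.
  assert (W10 : (W n).[4*m+10] = q (m+4)) by W_letter.
  assert (W11 : (W n).[4*m+11] = q (m+4)) by W_letter.
  assert (W12 : (W n).[4*m+12] = y (m+5)) by W_letter.
  assert (W13 : (W n).[4*m+13] = y (m+4)) by W_letter.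
  assert (Hk2 : exists k2, 4*m+13 < k2 < length (W n) /\ (W n).[k2] = y (m+5)).
  { destruct (le_lt_dec (m+5) (n+2)).
    - exists (4*m+17). split; [lia|W_letter].
    - exists (4*m+15). split; [lia|W_letter]. }
  destruct Hk2 as [k2 [[Ka Kb] Kc]].
  pose proof (repeated_letter_short HW HN (4*m+10) (4*m+11) ltac:(lia) ltac:(lia)
                ltac:(congruence)) as L3. rewrite W10 in L3.
  pose proof (repeated_letter_short HW HN (4*m+12) k2 ltac:(lia) ltac:(lia)
                ltac:(congruence)) as L4. rewrite W12 in L4.
  pose proof (img_start_S A th (W n) (4*m+10) ltac:(lia)) as R1. rewrite W10, S10 in R1.
  pose proof (img_start_S A th (W n) (4*m+11) ltac:(lia)) as R2. rewrite W11 in R2.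
  pose proof (img_start_S A th (W n) (4*m+12) ltac:(lia)) as R3. rewrite W12 in R3.
  replace (S (4*m+10)) with (4*m+11) in R1 by lia.
  replace (S (4*m+11)) with (4*m+12) in R2 by lia.
  replace (S (4*m+12)) with (4*m+13) in R3 by lia.
  pose proof (img_nth_fixed HW (4*m+13) (y (m+4)) ltac:(lia) W13 Hl) as K2.
  pose proof (img_start_lt HW (4*m+13) ltac:(lia) ltac:(rewrite W13, Hl; reflexivity)) as I13.
  assert (E3 : length (th (q (m+4))) = 0 /\ length (th (y (m+5))) = 1).
  { assert (HL1 : length (th (q (m+4))) = 0 \/ length (th (q (m+4))) = 1) by lia.
    assert (HL2 : length (th (y (m+5))) = 0 \/ length (th (y (m+5))) = 1) by lia.
    destruct HL1 as [E3|E3]; destruct HL2 as [E4|E4]; rewrite E3 in R1, R2; rewrite E4 in R3;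
      rewrite R3, R2, R1 in K2, I13; try (split; assumption); try lia.
    replace (4*m+8+0+0+0) with (4*m+8) in K2 by lia. rewrite N8 in K2.
    unfold y, s_letter in K2. lia. }
  destruct E3 as [E3 E4].
  pose proof (singleton_of_length1 _ E4) as Hl5.
  pose proof (img_nth_single HW (4*m+12) ltac:(lia) ltac:(rewrite W12; exact Hl5)) as V12.
  rewrite W12, R2, R1, E3 in V12. replace (4*m+8+0+0) with (4*m+8) in V12 by lia.
  rewrite N8 in V12.
  pose proof (img_nth_single HW k2 ltac:(lia) ltac:(rewrite Kc; exact Hl5)) as Vk.
  rewrite Kc, <- V12 in Vk.
  pose proof (img_start_mono A th (W n) (4*m+13) k2 ltac:(lia) ltac:(lia)) as Mo.
  pose proof (img_start_lt HW k2 ltac:(lia) ltac:(rewrite Kc; exact E4)) as Ik.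
  rewrite E3 in R1, R2. rewrite E4 in R3.
  assert (Ek : pos k2 = 4*m+9) by lia.
  rewrite Ek, N9 in Vk. unfold y, s_letter in Vk. lia.
Qed.

(* [W n] closes with [y (m+5) y (m+4) s y (m+5)]: the fixed [y (m+4)] leaves no room in
   [W m] for the image of the later [y (m+5)]. *)
Lemma subst_longer_by_one : n = m + 1 -> False.
Proof.
  intros En. destruct (subst_longer_erases_square ltac:(lia)) as [S10 Hl].
  assert (N8 : (W m).[4*m+8] = s_letter) by W_letter.
  assert (W10 : (W n).[4*m+10] = y (m+5)) by W_letter.
  assert (W11 : (W n).[4*m+11] = y (m+4)) by W_letter.
  assert (W13 : (W n).[4*m+13] = y (m+5)) by W_letter.
  pose proof (repeated_letter_short HW HN (4*m+10) (4*m+13) ltac:(lia) ltac:(lia)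
                ltac:(congruence)) as L3. rewrite W10 in L3.
  pose proof (img_start_S A th (W n) (4*m+10) ltac:(lia)) as R1. rewrite W10, S10 in R1.
  pose proof (img_start_S A th (W n) (4*m+11) ltac:(lia)) as R2. rewrite W11, Hl in R2.
  simpl length in R2.
  replace (S (4*m+10)) with (4*m+11) in R1 by lia.
  replace (S (4*m+11)) with (4*m+12) in R2 by lia.
  pose proof (img_nth_fixed HW (4*m+11) (y (m+4)) ltac:(lia) W11 Hl) as K2.
  assert (E3 : length (th (y (m+5))) = 1).
  { destruct (Nat.eq_dec (length (th (y (m+5)))) 0) as [E3|E3]; [|lia].
    rewrite E3 in R1. rewrite R1 in K2.
    replace (4*m+8+0) with (4*m+8) in K2 by lia. rewrite N8 in K2. unfold y, s_letter in K2. lia. }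
  pose proof (img_start_lt HW (4*m+13) ltac:(lia) ltac:(rewrite W13; exact E3)) as I13.
  pose proof (img_start_mono A th (W n) (4*m+12) (4*m+13) ltac:(lia) ltac:(lia)) as Mo.
  lia.
Qed.

Lemma W_subst_factor_eq : n = m.
Proof.
  destruct (lt_eq_lt_dec n m) as [[Hlt|Heq]|Hgt]; [exfalso|exact Heq|exfalso].
  - exact (subst_not_shorter Hlt).
  - destruct (le_lt_dec (m + 2) n).
    + exact (subst_longer_by_two ltac:(assumption)).
    + exact (subst_longer_by_one ltac:(lia)).
Qed.

End Rigidity.

(** * The identities [W (k+1) = V k] *)

Definition W_prefix : list nat := [y 1; t_letter; y 2; y 1; y 3; y 2; q 3; q 3].
Definition V_prefix : list nat := [y 1; t_letter; y 2; y 1; y 3; q 3; y 2; q 3].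

Definition V (k : nat) : list nat := V_prefix ++ blocks 4 k ++ closing (S k).

Lemma W_S k : W (S k) = W_prefix ++ blocks 4 k ++ closing (S k).
Proof. reflexivity. Qed.

Lemma In_V k x : In x (V k) <-> In x (W (S k)).
Proof. rewrite W_S. unfold V. rewrite !in_app_iff. unfold V_prefix, W_prefix. simpl. tauto. Qed.

Lemma subst_word_W_V th k : th (y 2) = [] \/ th (q 3) = [] ->
  subst_word th (W (S k)) = subst_word th (V k).
Proof.
  intros H. rewrite W_S. unfold V. rewrite !subst_word_app. f_equal.
  unfold W_prefix, V_prefix, subst_word. simpl.
  destruct H as [H|H]; rewrite H; simpl; rewrite ?app_nil_r; reflexivity.
Qed.

(* The images of the two [q 3] of [V k] would be equal letters of [W m] exactly two apart,
   and no twins of [W m] are. *)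
Lemma V_subst_factor_absurd k m A B th : W m = A ++ subst_word th (V k) ++ B ->
  th (y 2) <> [] -> th (q 3) <> [] -> False.
Proof.
  intros HW Hy2 Hq3.
  pose proof (W_length m) as LW. pose proof (W_pairs_distinct m) as HN.
  assert (LV : 8 <= length (V k)) by (unfold V; rewrite !length_app; simpl; lia).
  assert (V2 : (V k).[2] = y 2) by reflexivity.
  assert (V5 : (V k).[5] = q 3) by reflexivity.
  assert (V6 : (V k).[6] = y 2) by reflexivity.
  assert (V7 : (V k).[7] = q 3) by reflexivity.
  pose proof (repeated_letter_short HW HN 2 6 ltac:(lia) ltac:(lia) ltac:(congruence)) as L2.
  pose proof (repeated_letter_short HW HN 5 7 ltac:(lia) ltac:(lia) ltac:(congruence)) as L5.
  rewrite V2 in L2. rewrite V5 in L5.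
  pose proof (length_pos_of_nonnil _ Hy2). pose proof (length_pos_of_nonnil _ Hq3).
  pose proof (singleton_of_length1 (th (q 3)) ltac:(lia)) as Lq3.
  pose proof (img_start_S A th (V k) 5 ltac:(lia)) as S6. rewrite V5 in S6.
  pose proof (img_start_S A th (V k) 6 ltac:(lia)) as S7. rewrite V6 in S7.
  pose proof (img_start_lt HW 7 ltac:(lia) ltac:(rewrite V7; lia)) as I7.
  pose proof (img_nth_single HW 5 ltac:(lia) ltac:(rewrite V5; exact Lq3)) as X5.
  pose proof (img_nth_single HW 7 ltac:(lia) ltac:(rewrite V7; exact Lq3)) as X7.
  rewrite V5 in X5. rewrite V7 in X7.
  pose proof (W_twins_of_eq m (img_start A th (V k) 5) (img_start A th (V k) 7)
                ltac:(lia) ltac:(lia) ltac:(congruence)) as P.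
  destruct_twins P; lia.
Qed.

Lemma opt_concat_none ph u x : In x u -> ph x = None -> opt_concat ph u = None.
Proof.
  induction u as [|a u IH]; simpl; [tauto|]. intros [->|Hin] Hx.
  - rewrite Hx. reflexivity.
  - rewrite (IH Hin Hx). destruct (ph a); reflexivity.
Qed.

Definition subst_of_opt (ph : nat -> option (list nat)) : nat -> list nat :=
  fun x => match ph x with Some s => s | None => [] end.

Lemma opt_concat_some ph u : (forall x, In x u -> ph x <> None) ->
  opt_concat ph u = Some (subst_word (subst_of_opt ph) u).
Proof.
  induction u as [|a u IH]; intros H; [reflexivity|].
  simpl opt_concat. rewrite IH by (intros; apply H; simpl; auto).
  rewrite subst_word_cons. unfold subst_of_opt.
  destruct (ph a) eqn:E; [reflexivity|]. exfalso. apply (H a); simpl; auto.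
Qed.

Lemma opt_concat_letters ph u : (forall x, In x u -> ph x = Some [x]) -> opt_concat ph u = Some u.
Proof.
  induction u as [|a u IH]; intros H; [reflexivity|].
  simpl opt_concat. rewrite IH by (intros; apply H; simpl; auto). rewrite (H a) by (simpl; auto).
  reflexivity.
Qed.

(* A substitution killing [y 2] or [q 3] identifies both sides; any other one sends neither
   side to a factor of [W (m+1)], by rigidity, so both sides evaluate to zero. *)
Lemma rees_sat_other k m : k <> m -> sat (rees (W (S m))) (W (S k)) (V k).
Proof.
  intros Hkm phi. apply rees_eq. rewrite !eval_rees.
  set (ph := fun x => proj1_sig (phi x)).
  destruct (classic (exists x, In x (W (S k)) /\ ph x = None)) as [[x [Hx Hn]]|Hall].
  - rewrite (opt_concat_none ph _ x Hx Hn), (opt_concat_none ph _ x (proj2 (In_V k x) Hx) Hn).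
    reflexivity.
  - assert (HU : forall x, In x (W (S k)) -> ph x <> None) by (intros x Hx Hn; apply Hall; eauto).
    rewrite (opt_concat_some ph _ HU), (opt_concat_some ph (V k))
      by (intros x Hx; apply HU, In_V, Hx).
    set (th := subst_of_opt ph).
    destruct (classic (th (y 2) = [] \/ th (q 3) = [])) as [Hz|Hnz].
    + rewrite (subst_word_W_V th k Hz). reflexivity.
    + assert (N2 : th (y 2) <> []) by tauto. assert (N3 : th (q 3) <> []) by tauto.
      destruct (factorb (subst_word th (W (S k))) (W (S m))) eqn:E1.
      * exfalso. apply factorb_spec in E1. destruct E1 as [A [B HW]].
        pose proof (W_subst_factor_eq (S k) (S m) A B th HW ltac:(lia) ltac:(lia) N2 N3). lia.
      * destruct (factorb (subst_word th (V k)) (W (S m))) eqn:E2; [|reflexivity].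
        exfalso. apply factorb_spec in E2. destruct E2 as [A [B HW]].
        exact (V_subst_factor_absurd k (S m) A B th HW N2 N3).
Qed.

Lemma rees_not_sat m : ~ sat (rees (W (S m))) (W (S m)) (V m).
Proof.
  intros Hs. specialize (Hs (fun x => rees_word (W (S m)) [x])).
  apply (f_equal (@proj1_sig _ _)) in Hs. rewrite !eval_rees in Hs. cbv beta in Hs.
  assert (Hph : forall x, In x (W (S m)) -> proj1_sig (rees_word (W (S m)) [x]) = Some [x]).
  { intros x Hx. unfold rees_word. cbn [proj1_sig].
    replace (factorb [x] (W (S m))) with true; [reflexivity|]. symmetry. apply factorb_spec.
    apply in_split in Hx. destruct Hx as [l1 [l2 E]]. exists l1, l2. exact E. }
  rewrite (opt_concat_letters _ _ Hph) in Hs.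
  rewrite (opt_concat_letters _ (V m) (fun x Hx => Hph x (proj1 (In_V m x) Hx))) in Hs.
  replace (factorb (W (S m)) (W (S m))) with true in Hs
    by (symmetry; apply factorb_spec; exists [], []; rewrite app_nil_r; reflexivity).
  destruct (factorb (V m) (W (S m))) eqn:E; [|discriminate].
  apply factorb_spec, factor_same_length in E.
  - apply (f_equal (fun l => l.[5])) in E. discriminate E.
  - rewrite W_S. unfold V. rewrite !length_app. reflexivity.
Qed.

Lemma var_gen_variety M : variety (var_gen M).
Proof.
  split; [|split].
  - intros A B f HA Hf Hs K HK HM. exact (proj1 HK A B f (HA K HK HM) Hf Hs).
  - intros A B f HA Hf Hi K HK HM. exact (proj1 (proj2 HK) A B f (HA K HK HM) Hf Hi).
  - intros I A HA K HK HM. exact (proj2 (proj2 HK) I A (fun i => HA i K HK HM)).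
Qed.

Lemma sat_variety (J : nat -> Prop) (lhs rhs : nat -> list nat) :
  variety (fun B => forall k, J k -> sat B (lhs k) (rhs k)).
Proof.
  split; [|split].
  - intros A B f HA Hf Hsurj k Hk phi.
    set (psi := fun x => proj1_sig (constructive_indefinite_description _ (Hsurj (phi x)))).
    assert (Hphi : phi = fun x => f (psi x)).
    { apply functional_extensionality. intros x. unfold psi.
      destruct (constructive_indefinite_description _ _). auto. }
    rewrite Hphi, !eval_word_hom by exact Hf. f_equal. apply HA, Hk.
  - intros A B f HA Hf Hinj k Hk phi. apply Hinj.
    rewrite <- !eval_word_hom by exact Hf. apply HA, Hk.
  - intros I A HA k Hk phi. rewrite !eval_word_prod.
    apply functional_extensionality_dep. intros i. apply HA, Hk.
Qed.

Lemma variety_inter (K1 K2 : mclass) : variety K1 -> variety K2 -> variety (fun B => K1 B /\ K2 B).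
Proof.
  intros [H1 [S1 P1]] [H2 [S2 P2]]. split; [|split].
  - intros A B f [HA1 HA2] Hf Hs. split; [exact (H1 A B f HA1 Hf Hs)|exact (H2 A B f HA2 Hf Hs)].
  - intros A B f [HA1 HA2] Hf Hi. split; [exact (S1 A B f HA1 Hf Hi)|exact (S2 A B f HA2 Hf Hi)].
  - intros I A HA. split; [apply P1|apply P2]; intros i; apply HA.
Qed.

Definition var_sat (M : monoid) (J : nat -> Prop) (lhs rhs : nat -> list nat) : mclass :=
  fun B => var_gen M B /\ forall k, J k -> sat B (lhs k) (rhs k).

Lemma var_sat_subvariety M J lhs rhs : subvariety_of_var M (var_sat M J lhs rhs).
Proof.
  split; [|intros B [HB _]; exact HB].
  apply variety_inter; [apply var_gen_variety|apply sat_variety].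
Qed.

Definition var_J (J : nat -> Prop) : mclass := var_sat Mcal J (fun k => W (S k)) V.

Lemma var_J_separates J J' k : J k -> ~ J' k -> ~ same_class (var_J J) (var_J J').
Proof.
  intros Hk HJ' Heq.
  assert (Hin : var_J J' (rees (W (S k)))).
  { split; [apply rees_in_var, W_isoterm|].
    intros k' Hk'. apply rees_sat_other. intros ->. contradiction. }
  apply Heq in Hin. exact (rees_not_sat k (proj2 Hin k Hk)).
Qed.

Lemma cantor_nat_pred :
  ~ exists g : (nat -> Prop) -> nat, forall J J', g J = g J' -> forall k, J k -> J' k.
Proof.
  intros [g Hg].
  set (D := fun k => exists J, g J = k /\ ~ J k).
  destruct (classic (D (g D))) as [HD|HD].
  - destruct HD as [J [E HJ]]. apply HJ. apply (Hg D J (eq_sym E)). exists J. auto.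
  - apply HD. exists D. auto.
Qed.

Theorem corollary1 : type_continuum Mcal.
Proof.
  intros [f Hf]. apply cantor_nat_pred. exists (fun J => f (var_J J)).
  intros J J' E k Hk. destruct (classic (J' k)) as [|HJ']; [assumption|exfalso].
  apply (var_J_separates J J' k Hk HJ').
  apply Hf; [apply var_sat_subvariety|apply var_sat_subvariety|exact E].
Qed.
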